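(* Let $X$ be a Banach space. Then the following are equivalent: (i) $X$ has weak normal structure; (ii) every orbitally Kannan mapping which diminishes the radius of orbits, defined on a weakly compact convex subset of $X$ into itself, has a (unique) fixed point.
   Context: For $x\in X$ and $A\subseteq X$, $r_x(A)=\sup\{\|x-y\|:y\in A\}$ and $\delta(A)$ is the diameter; $O_T(x)=\{x,Tx,T^2x,\dots\}$. A map $T:C\to C$ is orbitally Kannan if $\|Tx-Ty\|\le\frac12\big(r_x(O_T(x))+r_y(O_T(y))\big)$ for all $x,y\in C$, and diminishes the radius of orbits if $r_{Tx}(O_T(Tx))\le r_x(O_T(x))$ for all $x\in C$. $X$ has weak normal structure if every weakly compact convex subset $K$ of $X$ with more than one point has normal structure: for every closed convex $K_0\subseteq K$ with $\delta(K_0)>0$ there is $x_0\in K_0$ with $r_{x_0}(K_0)<\delta(K_0)$. *)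

From HB Require Import structures.
From mathcomp Require Import all_boot all_order all_algebra.
From mathcomp Require Import all_classical all_reals all_analysis.
From Stdlib Require List.
Set Implicit Arguments. Unset Strict Implicit. Unset Printing Implicit Defensive.
Import Order.TTheory GRing.Theory Num.Theory.
Import numFieldNormedType.Exports.
Local Open Scope classical_set_scope.
Local Open Scope ring_scope.

Section Defs.
Context {R : realType} {X : normedModType R}.

Definition rad (x : X) (A : set X) : R := sup [set `|x - y| | y in A].

Definition diam (A : set X) : R :=
  sup [set `|x - y| | x in A & y in A].

Definition orbit (T : X -> X) (x : X) : set X := range (fun n : nat => iter n T x).

Definition convex_set_of (A : set X) : Prop :=
  forall (x y : X) (t : R), A x -> A y -> 0 <= t -> t <= 1 -> A (t *: x + (1 - t) *: y).

Definition dual_functional (f : X -> R) : Prop :=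
  (forall (a : R) (x y : X), f (a *: x + y) = a * f x + f y) /\ continuous f.

Definition weak_open (U : set X) : Prop :=
  forall x, U x -> exists (fs : seq (X -> R)) (e : R),
    [/\ forall f, f \in fs -> dual_functional f, 0 < e &
        [set y | forall f, f \in fs -> `|f y - f x| < e] `<=` U].

Definition weakly_compact (K : set X) : Prop :=
  forall (I : Type) (U : I -> set X),
    (forall i, weak_open (U i)) -> K `<=` \bigcup_i U i ->
    exists s : seq I, K `<=` [set x | exists2 i, Stdlib.Lists.List.In i s & U i x].

Definition normal_structure (K : set X) : Prop :=
  forall K0 : set X, K0 `<=` K -> closed K0 -> convex_set_of K0 -> 0 < diam K0 ->
    exists2 x0, K0 x0 & rad x0 K0 < diam K0.

Definition weak_normal_structure : Prop :=
  forall K : set X, weakly_compact K -> convex_set_of K ->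
    (exists x y, [/\ K x, K y & x <> y]) -> normal_structure K.

Definition orbitally_Kannan (C : set X) (T : X -> X) : Prop :=
  forall x y, C x -> C y ->
    `|T x - T y| <= (rad x (orbit T x) + rad y (orbit T y)) / 2.

Definition diminishes_radius_of_orbits (C : set X) (T : X -> X) : Prop :=
  forall x, C x -> rad (T x) (orbit T (T x)) <= rad x (orbit T x).

End Defs.

From mathcomp Require Import all_boot all_order all_algebra.
From mathcomp Require Import all_classical all_reals all_analysis.
From mathcomp Require Import lra.
Import Order.TTheory GRing.Theory Num.Theory.
Import numFieldNormedType.Exports.
Local Open Scope classical_set_scope.
Local Open Scope ring_scope.
Set Implicit Arguments. Unset Strict Implicit. Unset Printing Implicit Defensive.

(* (i) -> (ii).  Let [f x] be the radius of the orbit of [x] and [lam] the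
   infimum of [f] on [C].  The closed convex hulls [K k] of the images under [T]
   of the sets [f <= lam + 1 / (k + 1)] decrease, lie in [C] and are weakly
   closed, so by weak compactness their intersection [Kinf] is nonempty.  The
   Kannan inequality puts [K k] in the ball of centre [T w] and radius
   [(f w + lam + 1 / (k + 1)) / 2] for every [w] in [C]; hence [f = lam] on
   [Kinf], [Kinf] is [T]-invariant and has diameter at most [lam].  If
   [lam > 0], normal structure gives [z] in [Kinf] with
   [r_z(Kinf) < diam Kinf <= lam = f z <= r_z(Kinf)].  So [lam = 0] and the
   points of [Kinf] are fixed; the Kannan inequality makes the fixed point
   unique.

   (ii) -> (i).  A closed convex [K0] of diameter [d > 0] without normal
   structure consists of diametral points, which allows one to choose
   [z_0, z_1, ...] in [K0] with [z_(n+1)] at distance [> d - d / (n + 2)] from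
   the convex hull of [z_0, ..., z_n].  On the closed convex hull of this
   sequence, the shift [z_k |-> z_(k+1)] (all other points going to [z_0])
   has all orbit radii equal to [d], so it is orbitally Kannan and
   diminishes the radius of orbits, but it has no fixed point.  That hull is
   weakly compact because closed convex sets are weakly closed
   (Hahn-Banach). *)

Section LinearFunctionals.
Context {R : realType} {X : normedModType R}.

Definition linear_functional (phi : X -> R) : Prop :=
  forall a x y, phi (a *: x + y) = a * phi x + phi y.

Definition sublinear (q : X -> R) : Prop :=
  (forall x y, q (x + y) <= q x + q y) /\
  (forall t x, 0 < t -> q (t *: x) = t * q x).

Lemma linear_functional0 phi : linear_functional phi -> phi 0 = 0.
Proof. by move=> lin; have := lin 1 0 0; rewrite scale1r addr0 mul1r; lra. Qed.

Lemma linear_functionalB phi : linear_functional phi ->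
  forall x y, phi (x - y) = phi x - phi y.
Proof.
by move=> lin x y; have := lin (-1) y x; rewrite scaleN1r mulN1r addrC [in RHS]addrC.
Qed.

Lemma sublinear0 q : sublinear q -> q 0 = 0.
Proof.
move=> [_ qZ]; have two_gt0 : (0 : R) < 2 by rewrite ltr0n.
by have := qZ 2 0 two_gt0; rewrite scaler0; lra.
Qed.

Lemma bounded_linear_continuous phi : linear_functional phi ->
  (forall x, `|phi x| <= `|x|) -> continuous phi.
Proof.
move=> lin bd x; apply/cvgrPdist_lt => e e0; near=> y.
rewrite -linear_functionalB //; apply: le_lt_trans (bd _) _.
near: y; apply: filterS (nbhsx_ballx x e e0) => y.
by rewrite -ball_normE.
Unshelve. all: by end_near.
Qed.

Definition dominated_linear_graph (q : X -> R) (G : set (X * R)) : Prop :=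
  [/\ forall x a b, G (x, a) -> G (x, b) -> a = b,
      forall t x a y b, G (x, a) -> G (y, b) -> G (t *: x + y, t * a + b) &
      forall x a, G (x, a) -> a <= q x].

Lemma dominated_linear_graph_chain q (F : set (set (X * R))) :
  F `<=` dominated_linear_graph q -> total_on F subset ->
  dominated_linear_graph q (\bigcup_(G in F) G).
Proof.
move=> FP Ftot.
have common G1 G2 : F G1 -> F G2 -> exists G, [/\ F G, G1 `<=` G & G2 `<=` G].
  by move=> F1 F2; case: (Ftot _ _ F1 F2) => sub; [exists G2 | exists G1]; split.
split.
- move=> x a b [G1 F1 G1a] [G2 F2 G2b].
  have [G [FG s1 s2]] := common _ _ F1 F2.
  by case: (FP _ FG) => fun_G _ _; apply: (fun_G x); [apply: s1 | apply: s2].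
- move=> t x a y b [G1 F1 G1a] [G2 F2 G2b].
  have [G [FG s1 s2]] := common _ _ F1 F2.
  by exists G => //; case: (FP _ FG) => _ lin _; apply: lin; [apply: s1 | apply: s2].
- by move=> x a [G FG Ga]; case: (FP _ FG) => _ _ dom; apply: dom.
Qed.

Section Extension.
Variables (q : X -> R) (G : set (X * R)) (v : X).
Hypotheses (subq : sublinear q) (domG : dominated_linear_graph q G) (G00 : G (0, 0)).

Lemma dominated_linear_graphZ s x a : G (x, a) -> G (s *: x, s * a).
Proof. by case: domG => _ lin _ Gxa; have := lin s x a 0 0 Gxa G00; rewrite !addr0. Qed.

(* An extension with value [c] at [v] stays below [q] iff
   [a - q (x - v) <= c <= q (x + v) - a] on [G]; by sublinearity every such
   lower bound is below every such upper bound. *)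
Lemma extension_value : exists c, forall x a, G (x, a) ->
  a - q (x - v) <= c /\ c <= q (x + v) - a.
Proof.
case: domG => _ lin dom; case: subq => qD _.
have bnd x a y b : G (x, a) -> G (y, b) -> a - q (x - v) <= q (y + v) - b.
  move=> Gxa Gyb; have := dom _ _ (lin 1 x a y b Gxa Gyb).
  rewrite scale1r mul1r; have := qD (x - v) (y + v).
  by rewrite addrACA addNr addr0; lra.
pose E := [set r | exists x a, G (x, a) /\ r = a - q (x - v)].
have E0 : E !=set0 by exists (0 - q (0 - v)), 0, 0.
have Eub : has_ubound E.
  by exists (q (0 + v) - 0) => _ [x [a [Gxa ->]]]; apply: bnd.
exists (sup E) => x a Gxa; split.
  by apply: ub_le_sup => //; exists x, a.
by apply: ge_sup => // _ [y [b [Gyb ->]]]; apply: bnd.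
Qed.

Lemma dominated_linear_graph_extend : ~ (exists a, G (v, a)) ->
  exists2 G', G `<` G' & dominated_linear_graph q G'.
Proof.
move=> Gv; case: (domG) => fun_G lin dom; case: subq => _ qZ.
have [c hc] := extension_value.
exists [set z | exists t x a, G (x, a) /\ z = (x + t *: v, a + t * c)].
  split; first by move=> [x a] Gxa; exists 0, x, a; rewrite scale0r mul0r !addr0.
  move=> GG'; apply: Gv; exists c.
  by apply: GG'; exists 1, 0, 0; rewrite scale1r mul1r !add0r.
split.
- move=> _ a1 a2 [t1 [x1 [b1 [G1 [-> ->]]]]] [t2 [x2 [b2 [G2 [e2 ->]]]]].
  have [e12|t12] := eqVneq t1 t2.
    rewrite -e12 in e2 *; have ex : x1 = x2 by apply: (addIr (t1 *: v)).
    by rewrite ex in G1; rewrite (fun_G _ _ _ G1 G2).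
  exfalso; apply: Gv; exists ((t1 - t2)^-1 * (- b1 + b2)).
  have -> : v = (t1 - t2)^-1 *: ((-1) *: x1 + x2).
    have -> : (-1) *: x1 + x2 = (t1 - t2) *: v.
      have -> : x2 = x1 + t1 *: v - t2 *: v by rewrite e2 addrK.
      by rewrite scaleN1r -addrA addKr scalerBl.
    by rewrite scalerA mulVf ?scale1r // subr_eq0.
  have := dominated_linear_graphZ ((t1 - t2)^-1) (lin (-1) x1 b1 x2 b2 G1 G2).
  by rewrite mulN1r.
- move=> s _ _ _ _ [t1 [x1 [a1 [G1 [-> ->]]]]] [t2 [x2 [a2 [G2 [-> ->]]]]].
  exists (s * t1 + t2), (s *: x1 + x2), (s * a1 + a2); split; first exact: lin.
  congr pair; first by rewrite scalerDr scalerA scalerDl addrACA.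
  by rewrite mulrDr mulrDl mulrA addrACA.
- move=> _ _ [t [x [a [Gxa [-> ->]]]]].
  have [t0|t0|->] := ltgtP t 0; last by rewrite scale0r mul0r !addr0; apply: dom.
  + have s0 : 0 < - t by rewrite oppr_gt0.
    have := (hc _ _ (dominated_linear_graphZ ((- t)^-1) Gxa)).1.
    rewrite -(ler_pM2l s0) mulrBr mulrA mulfV ?gt_eqF // mul1r -qZ //.
    rewrite scalerBr scalerA mulfV ?gt_eqF // scale1r scaleNr opprK; lra.
  + have := (hc _ _ (dominated_linear_graphZ t^-1 Gxa)).2.
    rewrite -(ler_pM2l t0) mulrBr mulrA mulfV ?gt_eqF // mul1r -qZ //.
    rewrite scalerDr scalerA mulfV ?gt_eqF // scale1r; lra.
Qed.

End Extension.

Theorem hahn_banach q : sublinear q ->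
  exists phi, linear_functional phi /\ forall x, phi x <= q x.
Proof.
move=> subq.
have [G [domG maxG]] := Zorn_bigcup (@dominated_linear_graph_chain q).
case: (domG) => fun_G lin dom.
have G00 : G (0, 0).
  case: (pselect (exists xa, G xa)) => [[[x a] Gxa]|G0].
    by have := lin (-1) x a x a Gxa Gxa; rewrite scaleN1r mulN1r !addNr.
  exfalso; apply: (maxG [set (0, 0)]).
    split; first by move=> xa Gxa; exfalso; apply: G0; exists xa.
    by move=> /(_ (0, 0) erefl) G00; apply: G0; exists (0, 0).
  split; [by move=> x a b [-> ->] [->] | | by move=> x a [-> ->]; rewrite sublinear0].
  by move=> t x a y b [-> ->] [-> ->]; rewrite scaler0 mulr0 !add0r.
have total x : exists a, G (x, a).
  apply: contrapT => Gx.
  have [G' GG' domG'] := dominated_linear_graph_extend subq domG G00 Gx.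
  exact: maxG GG' domG'.
have [phi Gphi] := choice total.
exists phi; split => [a x y|x]; last exact: dom.
by apply: (fun_G (a *: x + y)); [exact: Gphi | exact: lin].
Qed.

End LinearFunctionals.

Section Separation.
Context {R : realType} {X : normedModType R}.
Variables (S : set X) (p s0 : X) (r : R).
Hypotheses (r_gt0 : 0 < r) (convS : convex_set_of S) (S_s0 : S s0)
  (S_far : forall s, S s -> r <= `|s - p|).

Let gauge_set x := [set y | exists t s, [/\ 0 <= t, S s &
                              y = `|x + t *: (s - p)| - t * (r / 2)]].

(* Sublinear, below the norm and [<= - r / 2] on [p - S]: a linear functional
   below it separates [p] from [S]. *)
Let gauge x := inf (gauge_set x).

Let gauge_set_lb x y : gauge_set x y -> - `|x| <= y.
Proof.
move=> [t [s [t0 Ss ->]]].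
have tr_le : t * r <= t * `|s - p| by rewrite ler_wpM2l // S_far.
have tr_ge0 : 0 <= t * r by rewrite mulr_ge0 // ltW.
have normZ : `|t *: (s - p)| = t * `|s - p| by rewrite normrZ ger0_norm.
have : `|t *: (s - p)| <= `|x + t *: (s - p)| + `|x|.
  by rewrite (le_trans _ (ler_normB _ _)) // addrAC subrr add0r.
lra.
Qed.

Let gauge_le x y : gauge_set x y -> gauge x <= y.
Proof. by move=> Qy; apply: ge_inf => //; exists (- `|x|); apply: gauge_set_lb. Qed.

Let gauge_ge x b : (forall y, gauge_set x y -> b <= y) -> b <= gauge x.
Proof.
move=> h; apply: lb_le_inf => //.
by exists (`|x + 0 *: (s0 - p)| - 0 * (r / 2)), 0, s0.
Qed.

Let gauge_le_norm x : gauge x <= `|x|.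
Proof. by apply: gauge_le; exists 0, s0; rewrite scale0r addr0 mul0r subr0. Qed.

Let gauge_subadditive x y : gauge (x + y) <= gauge x + gauge y.
Proof.
suff core e1 e2 : gauge_set x e1 -> gauge_set y e2 -> gauge (x + y) <= e1 + e2.
  have h e2 : gauge_set y e2 -> gauge (x + y) - e2 <= gauge x.
    by move=> Qe2; apply: gauge_ge => e1 Qe1; have := core _ _ Qe1 Qe2; lra.
  have : gauge (x + y) - gauge x <= gauge y.
    by apply: gauge_ge => e2 Qe2; have := h _ Qe2; lra.
  lra.
move=> [t1 [s1 [t1_ge0 Ss1 ->]]] [t2 [s2 [t2_ge0 Ss2 ->]]].
have [t_eq0|t_neq0] := eqVneq (t1 + t2) 0.
  have [-> ->] : t1 = 0 /\ t2 = 0 by move/eqP: t_eq0; lra.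
  rewrite !scale0r !addr0 !mul0r !subr0.
  exact: le_trans (gauge_le_norm _) (ler_normD _ _).
(* pair [x + y] with the convex combination of [s1] and [s2] of weights
   proportional to [t1] and [t2] *)
have t_gt0 : 0 < t1 + t2 by rewrite lt_def t_neq0 /=; apply: addr_ge0.
set t := t1 + t2 in t_neq0 t_gt0 *.
have w_ge0 : 0 <= t1 / t by apply: divr_ge0 => //; apply: ltW.
have w_le1 : t1 / t <= 1 by rewrite ler_pdivrMr // mul1r lerDl.
have eT : 1 - t1 / t = t2 / t.
  by apply: (mulfI t_neq0); rewrite mulrBr mulr1 ![t * (_ / t)]mulrC !divfK // /t; lra.
have := convS Ss1 Ss2 w_ge0 w_le1; rewrite eT => Ss.
apply: le_trans (gauge_le _) _.
  by exists t, ((t1 / t) *: s1 + (t2 / t) *: s2); split => //; exact: ltW.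
have -> : t *: ((t1 / t) *: s1 + (t2 / t) *: s2 - p) =
          t1 *: (s1 - p) + t2 *: (s2 - p).
  rewrite scalerBr scalerDr !scalerA ![t * (_ / t)]mulrC !divfK //.
  by rewrite !scalerBr /t scalerDl opprD addrACA.
have : `|x + y + (t1 *: (s1 - p) + t2 *: (s2 - p))| <=
       `|x + t1 *: (s1 - p)| + `|y + t2 *: (s2 - p)|.
  by rewrite addrACA ler_normD.
rewrite /t; lra.
Qed.

Let gauge_homogeneous k x : 0 < k -> gauge (k *: x) = k * gauge x.
Proof.
move=> k0; have kn0 : k != 0 by rewrite gt_eqF.
apply/eqP; rewrite eq_le; apply/andP; split.
  rewrite -ler_pdivrMl //; apply: gauge_ge => e [t [s [t0 Ss ->]]].
  rewrite ler_pdivrMl //; apply: gauge_le; exists (k * t), s.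
  split => //; first by rewrite mulr_ge0 // ltW.
  by rewrite -scalerA -scalerDr normrZ gtr0_norm // mulrBr mulrA.
apply: gauge_ge => e [t [s [t0 Ss ->]]].
have -> : `|k *: x + t *: (s - p)| - t * (r / 2) =
          k * (`|x + (t / k) *: (s - p)| - (t / k) * (r / 2)).
  have -> : t *: (s - p) = k *: ((t / k) *: (s - p)).
    by rewrite scalerA [k * _]mulrC divfK.
  have -> : t * (r / 2) = k * ((t / k) * (r / 2)) by rewrite mulrA [k * _]mulrC divfK.
  by rewrite -scalerDr normrZ gtr0_norm // mulrBr.
rewrite ler_pM2l //; apply: gauge_le; exists (t / k), s; split => //.
by apply: divr_ge0 => //; apply: ltW.
Qed.

Lemma convex_separation : exists phi, [/\ linear_functional phi,
  forall x, `|phi x| <= `|x| & forall s, S s -> phi p + r / 2 <= phi s].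
Proof.
have [phi [lin phi_le]] :
    exists phi, linear_functional phi /\ forall x, phi x <= gauge x.
  apply: hahn_banach; split; [exact: gauge_subadditive | exact: gauge_homogeneous].
exists phi; split => // [x|s Ss].
  rewrite ler_norml (le_trans (phi_le x) (gauge_le_norm x)) andbT.
  have := le_trans (phi_le (- x)) (gauge_le_norm (- x)).
  by rewrite normrN -sub0r linear_functionalB // linear_functional0 //; lra.
have : phi (p - s) <= - (r / 2).
  apply: le_trans (phi_le _) _; apply: gauge_le; exists 1, s; split => //.
  by rewrite scale1r addrA subrK subrr normr0 mul1r sub0r.
by rewrite linear_functionalB //; lra.
Qed.

End Separation.

Lemma In_pmap_id (I : Type) (s : seq (option I)) i :
  List.In (Some i) s -> List.In i (pmap id s).
Proof.
elim: s => [//|[a|] s IH] /=; last by move=> [//|/IH].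
by move=> [[->]|/IH]; [left | right].
Qed.

Lemma In_leq_foldr_maxn (s : seq nat) i : List.In i s -> (i <= foldr maxn 0 s)%N.
Proof.
elim: s => [//|a s IH] /= [->|/IH h]; first by rewrite leq_maxl.
by rewrite (leq_trans h) // leq_maxr.
Qed.

Lemma In_pos_lower_bound {R : realType} (A : Type) (s : seq A) (g : A -> R) :
  (forall i, 0 < g i) -> exists2 d, 0 < d & forall i, List.In i s -> d <= g i.
Proof.
move=> gp; elim: s => [|a s [d d0 hd]]; first by exists 1.
exists (Num.min d (g a)); first by rewrite lt_min d0 gp.
by move=> i /= [<-|/hd]; rewrite ge_min ?lexx ?orbT // => ->.
Qed.

Section NormTopology.
Context {R : realType} {X : normedModType R}.

Lemma closure_normP (A : set X) x :
  closure A x <-> forall e, 0 < e -> exists2 y, A y & `|x - y| < e.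
Proof.
split=> [clA e e0 | h B /nbhs_ballP [e e0 sB]].
  have [y [Ay]] := clA (ball x e) (nbhsx_ballx _ _ e0).
  by rewrite -ball_normE => xy; exists y.
have [y Ay xy] := h e e0; exists y; split => //; apply: sB.
by rewrite -ball_normE.
Qed.

Lemma closed_distP (S : set X) : closed S <->
  forall p, ~ S p -> exists2 r, 0 < r & forall s, S s -> r <= `|s - p|.
Proof.
split=> [cS p Sp | h p clp].
  apply: contrapT => hn; apply: Sp; apply: cS; apply/closure_normP => e e0.
  apply: contrapT => hne; apply: hn; exists e => // s Ss.
  by rewrite leNgt; apply/negP => lt; apply: hne; exists s; rewrite // distrC.
apply: contrapT => Sp; have [r r0 hr] := h p Sp.
have [y Sy py] := (closure_normP _ _).1 clp _ r0.
by have := hr y Sy; rewrite distrC leNgt py.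
Qed.

Lemma convex_closed_ball (a : X) r : convex_set_of [set z | `|a - z| <= r].
Proof.
move=> x y t /= hx hy t0 t1; have t1' : 0 <= 1 - t by rewrite subr_ge0.
have -> : a - (t *: x + (1 - t) *: y) = t *: (a - x) + (1 - t) *: (a - y).
  by rewrite !scalerBr addrACA -scalerDl subrKC scale1r opprD.
apply: le_trans (ler_normD _ _) _; rewrite !normrZ !ger0_norm //.
have := ler_wpM2l t0 hx; have := ler_wpM2l t1' hy; lra.
Qed.

Lemma convex_closure (A : set X) : convex_set_of A -> convex_set_of (closure A).
Proof.
move=> cvA x1 x2 t c1 c2 t0 t1; apply/closure_normP => e e0.
have t1' : 0 <= 1 - t by rewrite subr_ge0.
have e2 : 0 < e / 2 by rewrite divr_gt0.
have [y1 A1 h1] := (closure_normP _ _).1 c1 _ e2.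
have [y2 A2 h2] := (closure_normP _ _).1 c2 _ e2.
exists (t *: y1 + (1 - t) *: y2); first exact: cvA.
have -> : t *: x1 + (1 - t) *: x2 - (t *: y1 + (1 - t) *: y2) =
          t *: (x1 - y1) + (1 - t) *: (x2 - y2).
  by rewrite !scalerBr opprD addrACA.
apply: le_lt_trans (ler_normD _ _) _; rewrite !normrZ !ger0_norm //.
have := ler_wpM2l t0 (ltW h1); have := ler_wpM2l t1' (ltW h2); lra.
Qed.

Lemma convex_nat_barycenter (K : set X) a b n : convex_set_of K -> K a -> K b ->
  exists2 w, K w & a + n%:R *: b = n.+1%:R *: w.
Proof.
move=> cvK Ka Kb; have n1_neq0 : n.+1%:R != 0 :> R by rewrite pnatr_eq0.
have t0 : 0 <= n.+1%:R^-1 :> R by rewrite invr_ge0.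
have t1 : n.+1%:R^-1 <= 1 :> R by rewrite invf_le1 ?ler1n // ltr0n.
exists (n.+1%:R^-1 *: a + (1 - n.+1%:R^-1) *: b); first exact: cvK.
rewrite scalerDr !scalerA mulfV // scale1r mulrBr mulr1 mulfV //.
by rewrite -natr1 addrK.
Qed.

Definition convex_hull (P : set X) : set X :=
  [set z | forall W, convex_set_of W -> P `<=` W -> W z].

Lemma subset_convex_hull P : P `<=` convex_hull P.
Proof. by move=> x Px W _ PW; apply: PW. Qed.

Lemma convex_convex_hull P : convex_set_of (convex_hull P).
Proof.
by move=> x y t hx hy t0 t1 W cvW PW; exact: cvW (hx W cvW PW) (hy W cvW PW) t0 t1.
Qed.

Lemma convex_hull_min P W : convex_set_of W -> P `<=` W -> convex_hull P `<=` W.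
Proof. by move=> cvW PW z; apply. Qed.

Lemma convex_hull_subset P1 P2 : P1 `<=` P2 -> convex_hull P1 `<=` convex_hull P2.
Proof. by move=> P12 z hz W cvW PW; apply: hz => // x /P12 /PW. Qed.

Lemma closure_convex_hull_min P W : closed W -> convex_set_of W -> P `<=` W ->
  closure (convex_hull P) `<=` W.
Proof.
move=> cW cvW PW; rewrite (closure_id W).1 //.
by apply: closureS; apply: convex_hull_min.
Qed.

End NormTopology.

Section WeakTopology.
Context {R : realType} {X : normedModType R}.

Lemma bounded_linear_dual (phi : X -> R) : linear_functional phi ->
  (forall x, `|phi x| <= `|x|) -> dual_functional phi.
Proof. by move=> lin bd; split; [exact: lin | exact: bounded_linear_continuous]. Qed.

Lemma weak_open_slab (phi : X -> R) p e :
  dual_functional phi -> weak_open [set y | `|phi y - phi p| < e].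
Proof.
move=> dphi x /= hx; exists [:: phi], (e - `|phi x - phi p|); split.
- by move=> f; rewrite inE => /eqP ->.
- by rewrite subr_gt0.
- move=> y /(_ phi (mem_head _ _)) /=.
  have : `|phi y - phi p| <= `|phi y - phi x| + `|phi x - phi p|.
    by rewrite (le_trans _ (ler_normD _ _)) // addrA subrK.
  lra.
Qed.

Lemma closed_convex_weak_openC (S : set X) :
  closed S -> convex_set_of S -> weak_open (~` S).
Proof.
move=> cS cvS x Sx; case: (pselect (S !=set0)) => [[s0 Ss0]|S0]; last first.
  by exists [::], 1; split=> // y _ Sy; apply: S0; exists y.
have [r r0 hr] := (closed_distP S).1 cS x Sx.
have [phi [lin bd sep]] := convex_separation r0 cvS Ss0 hr.
exists [:: phi], (r / 2); split.
- by move=> f; rewrite inE => /eqP ->; exact: bounded_linear_dual.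
- by rewrite divr_gt0.
- move=> y /(_ phi (mem_head _ _)) /= + Sy; have := sep y Sy.
  by rewrite ltr_norml; lra.
Qed.

Lemma weakly_compact_closed (C : set X) : weakly_compact C -> closed C.
Proof.
move=> wC; apply/closed_distP => p Cp.
pose gap (c : {c | C c}) := `|sval c - p|.
have gap_gt0 c : 0 < gap c.
  rewrite normr_gt0 subr_eq0; apply: contra_notN Cp => /eqP <-; exact: svalP.
have sep c : exists phi, [/\ linear_functional phi,
    forall x, `|phi x| <= `|x| & phi p + gap c / 2 <= phi (sval c)].
  have conv1 : convex_set_of [set sval c].
    by move=> x y t -> -> _ _; rewrite -scalerDl subrKC scale1r.
  have far1 s : [set sval c] s -> gap c <= `|s - p| by move=> ->.
  have [phi [lin bd sepc]] := convex_separation (gap_gt0 c) conv1 erefl far1.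
  by exists phi; split => //; apply: sepc.
have [Phi hPhi] := choice sep.
pose U c := [set y | `|Phi c y - Phi c (sval c)| < gap c / 4].
have wU c : weak_open (U c).
  by have [lin bd _] := hPhi c; apply/weak_open_slab/bounded_linear_dual.
have cov : C `<=` \bigcup_c U c.
  move=> x Cx; exists (exist _ x Cx) => //.
  by rewrite /U /= subrr normr0 divr_gt0.
have [s covs] := wC _ U wU cov.
have [d d0 hd] := In_pos_lower_bound s (fun c => divr_gt0 (gap_gt0 c) (ltr0n R 4)).
exists d => // y Cy; have [c cs Ucy] := covs y Cy; have [lin bd sepc] := hPhi c.
have := bd (y - p); rewrite linear_functionalB // => bd_yp.
have := hd c cs; have := ler_norm (Phi c y - Phi c p).
by move: sepc Ucy; rewrite /U /= ltr_norml /gap => + /andP[+ +]; lra.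
Qed.

Lemma weakly_compact_closed_convex_sub (K C : set X) : weakly_compact K ->
  C `<=` K -> closed C -> convex_set_of C -> weakly_compact C.
Proof.
move=> wK CK cC cvC I U wU cov.
pose U' (o : option I) := if o is Some i then U i else ~` C.
have [|x Kx|s hs] := wK _ U'; first by case=> //; exact: closed_convex_weak_openC.
  by case: (pselect (C x)) => [/cov [i _ Ui]|Cx]; [exists (Some i) | exists None].
exists (pmap id s) => x Cx; have [[i|] ins hi] := hs x (CK x Cx); last by [].
by exists i => //; apply: In_pmap_id.
Qed.

End WeakTopology.

Section RadiusDiameter.
Context {R : realType} {X : normedModType R}.
Implicit Types (A : set X) (x y : X) (b : R).

Lemma rad_ge0 x A : 0 <= rad x A.
Proof.
rewrite /rad; case: (pselect (has_sup [set `|x - y| | y in A])).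
  move=> [[_ [y Ay _]] ub].
  by apply: le_trans (normr_ge0 (x - y)) _; apply: ub_le_sup => //; exists y.
by move=> ?; rewrite sup_out.
Qed.

Lemma le_rad x A b y : (forall z, A z -> `|x - z| <= b) -> A y ->
  `|x - y| <= rad x A.
Proof.
by move=> Ab Ay; apply: ub_le_sup; [exists b => _ [z Az <-]; apply: Ab | exists y].
Qed.

Lemma rad_le x A b : A !=set0 -> (forall z, A z -> `|x - z| <= b) -> rad x A <= b.
Proof.
move=> [y Ay] Ab; apply: ge_sup => [|_ [z Az <-]]; last exact: Ab.
by exists `|x - y|, y.
Qed.

Lemma le_diam A b x y : (forall u v, A u -> A v -> `|u - v| <= b) ->
  A x -> A y -> `|x - y| <= diam A.
Proof.
move=> Ab Ax Ay; apply: ub_le_sup; last by exists x => //; exists y.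
by exists b => _ [u Au [v Av <-]]; apply: Ab.
Qed.

Lemma diam_le A b : A !=set0 -> (forall u v, A u -> A v -> `|u - v| <= b) ->
  diam A <= b.
Proof.
move=> [x Ax] Ab; apply: ge_sup => [|_ [u Au [v Av <-]]]; last exact: Ab.
by exists `|x - x|, x => //; exists x.
Qed.

Definition orbit_radius (T : X -> X) x : R := rad x (orbit T x).

Lemma orbit_radius_le T x b : (forall n, `|x - iter n T x| <= b) ->
  orbit_radius T x <= b.
Proof. by move=> Tb; apply: rad_le => [|_ [n _ <-]]; [exists x, 0%N | apply: Tb]. Qed.

Lemma le_orbit_radius T x b n : (forall m, `|x - iter m T x| <= b) ->
  `|x - iter n T x| <= orbit_radius T x.
Proof.
by move=> Tb; apply: (le_rad (b := b)) => [_ [m _ <-]|]; [apply: Tb | exists n].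
Qed.

Lemma orbit_radius_fixed T x : T x = x -> orbit_radius T x = 0.
Proof.
move=> Tx; apply/le_anti; rewrite rad_ge0 andbT; apply: orbit_radius_le => n.
have -> : iter n T x = x by elim: n => //= n ->.
by rewrite subrr normr0.
Qed.

Lemma orbitally_Kannan_fixed_unique (C : set X) T x y : orbitally_Kannan C T ->
  C x -> C y -> T x = x -> T y = y -> x = y.
Proof.
move=> kan Cx Cy Tx Ty; have := kan x y Cx Cy.
rewrite -[rad x _]/(orbit_radius T x) -[rad y _]/(orbit_radius T y).
rewrite !orbit_radius_fixed // Tx Ty addr0 mul0r normr_le0 subr_eq0.
by move/eqP.
Qed.

End RadiusDiameter.

Section KannanFixedPoint.
Context {R : realType} {X : normedModType R}.
Variables (C : set X) (T : X -> X).
Hypotheses (wC : weakly_compact C) (cvC : convex_set_of C) (C_nonempty : C !=set0)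
  (TC : forall x, C x -> C (T x)) (kanT : orbitally_Kannan C T)
  (dimT : diminishes_radius_of_orbits C T).

Local Notation f := (orbit_radius T).

Let iter_in n x : C x -> C (iter n T x).
Proof. by move=> Cx; elim: n => //= n /TC. Qed.

Let orbit_radius_iter n x : C x -> f (iter n T x) <= f x.
Proof.
move=> Cx; elim: n => //= n IH.
exact: le_trans (dimT (iter_in n Cx)) IH.
Qed.

Let lam := inf [set f x | x in C].

Let lam_le x : C x -> lam <= f x.
Proof.
by move=> Cx; apply: ge_inf; [exists 0 => _ [y _ <-]; apply: rad_ge0 | exists x].
Qed.

Let lam_ge0 : 0 <= lam.
Proof.
have [c Cc] := C_nonempty.
by apply: lb_le_inf => [|_ [x _ <-]]; [exists (f c), c | exact: rad_ge0].
Qed.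

Let eps (k : nat) : R := k.+1%:R^-1.

Let eps_gt0 k : 0 < eps k. Proof. by rewrite invr_gt0. Qed.

Let le_eps a b : (forall k, a <= b + eps k) -> a <= b.
Proof.
by move=> h; rewrite leNgt; apply/negP => /ltr_add_invr [k]; rewrite ltNge h.
Qed.

Let almost_minimal k := [set x | C x /\ f x <= lam + eps k].

Let almost_minimal_nonempty k : almost_minimal k !=set0.
Proof.
have ne : [set f x | x in C] !=set0 by have [c Cc] := C_nonempty; exists (f c), c.
have lt : lam < lam + eps k by rewrite ltrDl.
by have [_ [x Cx <-] /ltW fx] := inf_lt ne lt; exists x.
Qed.

Let K k := closure (convex_hull (T @` almost_minimal k)).

Let closed_K k : closed (K k). Proof. exact: closed_closure. Qed.

Let convex_K k : convex_set_of (K k).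
Proof. by apply: convex_closure; apply: convex_convex_hull. Qed.

Let K_sub_C k : K k `<=` C.
Proof.
apply: closure_convex_hull_min => //; first exact: weakly_compact_closed.
by move=> _ [x [Cx _] <-]; apply: TC.
Qed.

Let K_decr m n : (m <= n)%N -> K n `<=` K m.
Proof.
move=> mn; apply: closureS; apply: convex_hull_subset; apply: image_subset => x [Cx fx].
by split=> //; apply: le_trans fx _; rewrite lerD2l lef_pV2 ?posrE // ler_nat ltnS.
Qed.

Let K_in_ball k w : C w -> K k `<=` [set z | `|T w - z| <= (f w + lam + eps k) / 2].
Proof.
move=> Cw; apply: closure_convex_hull_min.
- exact: closed_closed_ball_.
- exact: convex_closed_ball.
- move=> _ [x [Cx fx] <-] /=; have := kanT Cw Cx.
  rewrite -[rad w _]/(f w) -[rad x _]/(f x); lra.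
Qed.

Let K_diam k a b : K k a -> K k b -> `|a - b| <= lam + eps k.
Proof.
move=> Ka; suff : K k `<=` [set z | `|a - z| <= lam + eps k] by apply.
apply: closure_convex_hull_min.
- exact: closed_closed_ball_.
- exact: convex_closed_ball.
- move=> _ [x [Cx fx] <-] /=; rewrite distrC.
  have := K_in_ball Cx Ka; have := lam_le Cx; rewrite /=; lra.
Qed.

Let Kinf := \bigcap_k K k.

Let Kinf_sub_C : Kinf `<=` C.
Proof. by move=> y /(_ 0%N I) /K_sub_C. Qed.

Let Kinf_nonempty : Kinf !=set0.
Proof.
apply: contrapT => Kinf0.
have cov : C `<=` \bigcup_k ~` K k.
  move=> x Cx; apply: contrapT => nx; apply: Kinf0; exists x => k _.
  by apply: contrapT => Kx; apply: nx; exists k.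
have [s covs] :=
  wC (fun k => closed_convex_weak_openC (@closed_K k) (@convex_K k)) cov.
pose N := foldr maxn 0%N s.
have [x [Cx fx]] := almost_minimal_nonempty N.
have [i si] := covs (T x) (TC Cx); apply; apply: (K_decr (In_leq_foldr_maxn si)).
by apply: subset_closure; apply: subset_convex_hull; exists x.
Qed.

Let Kinf_orbit y : Kinf y -> f y = lam /\ forall n, `|y - iter n T y| <= lam.
Proof.
move=> Ky; have Cy := Kinf_sub_C Ky.
have orbit_le n : `|y - iter n T y| <= (f y + lam) / 2.
  case: n => [|n]; first by rewrite subrr normr0 divr_ge0 // addr_ge0 ?lam_ge0 ?rad_ge0.
  apply: le_eps => k; have := K_in_ball (iter_in n Cy) (Ky k I).
  rewrite /= distrC; have := orbit_radius_iter n Cy; have := eps_gt0 k; lra.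
have fy : f y = lam.
  by apply/le_anti; rewrite lam_le // andbT; have := orbit_radius_le orbit_le; lra.
by split=> // n; have := orbit_le n; rewrite fy; lra.
Qed.

Let Kinf_invariant y : Kinf y -> Kinf (T y).
Proof.
move=> Ky k _; have [fy _] := Kinf_orbit Ky.
apply: subset_closure; apply: subset_convex_hull; exists y => //.
by split; [exact: Kinf_sub_C | rewrite fy lerDl ltW].
Qed.

Let Kinf_diam a b : Kinf a -> Kinf b -> `|a - b| <= lam.
Proof. by move=> Ka Kb; apply: le_eps => k; apply: K_diam (Ka k I) (Kb k I). Qed.

Lemma orbitally_Kannan_fixed_point : @weak_normal_structure R X ->
  exists2 x, C x & T x = x.
Proof.
move=> wns; have [y Ky] := Kinf_nonempty; have [fy orbit_y] := Kinf_orbit Ky.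
have Cy := Kinf_sub_C Ky.
have [lam0|lam_neq0] := eqVneq lam 0.
  exists y => //; apply/esym/eqP; rewrite -subr_eq0 -normr_le0.
  by have := orbit_y 1%N; rewrite lam0.
have [n yn] : exists n, y <> iter n T y.
  apply: contrapT => orbit_const; move/eqP: lam_neq0; apply.
  rewrite -fy; apply: orbit_radius_fixed; apply/esym.
  by apply: contrapT => y1; apply: orbit_const; exists 1%N.
have Kiter m w : Kinf w -> Kinf (iter m T w) by elim: m => //= m IH /IH /Kinf_invariant.
have nsC : normal_structure C.
  by apply: wns => //; exists y, (iter n T y); split => //; apply: iter_in.
have [|z Kz] := nsC Kinf Kinf_sub_C (closed_bigI (fun k _ => @closed_K k))
    (fun a b t Ka Kb t0 t1 k _ => convex_K (Ka k I) (Kb k I) t0 t1).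
  apply: lt_le_trans (le_diam Kinf_diam Ky (Kiter n y Ky)).
  by rewrite normr_gt0 subr_eq0; apply/eqP.
rewrite ltNge => /negP rad_lt; exfalso; apply: rad_lt.
have diam_lam : diam Kinf <= lam by apply: diam_le Kinf_diam; exists y.
apply: le_trans diam_lam _; have [<- _] := Kinf_orbit Kz.
apply: orbit_radius_le => m; apply: (le_rad (b := lam)) (Kiter m z Kz).
by move=> w; apply: Kinf_diam.
Qed.

End KannanFixedPoint.

Section DiametralSequence.
Context {R : realType} {X : normedModType R}.
Variables (K : set X) (d : R) (z0 : X) (far : X -> R -> X).
Hypotheses (d_gt0 : 0 < d) (cvK : convex_set_of K) (K_z0 : K z0)
  (farP : forall x g, K x -> 0 < g -> K (far x g) /\ d - g < `|x - far x g|).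

(* [psum m] is the sum of the first [m] terms; term [m] is chosen almost
   diametral to their barycenter [psum m / m]. *)
Let next m s := if m is k.+1 then far (m%:R^-1 *: s) (d / (m%:R * m.+1%:R)) else z0.

Fixpoint psum n : X := if n is m.+1 then psum m + next m (psum m) else 0.

Let z n := next n (psum n).

Let psumS n : psum n.+1 = psum n + z n. Proof. by []. Qed.

Let z_succE n c : psum n.+1 = n.+1%:R *: c ->
  z n.+1 = far c (d / (n.+1%:R * n.+2%:R)).
Proof.
move=> psum_c; have <- : n.+1%:R^-1 *: psum n.+1 = c.
  by rewrite psum_c scalerA mulVf ?pnatr_eq0 ?scale1r.
by [].
Qed.

Let gap_gt0 n : 0 < d / (n.+1%:R * n.+2%:R).
Proof. by rewrite divr_gt0 ?mulr_gt0 ?ltr0n. Qed.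

Let z_mean n : K (z n) /\ exists2 c, K c & psum n.+1 = n.+1%:R *: c.
Proof.
elim: n => [|n [Kzn [c Kc psum_c]]].
  by split; [exact: K_z0 | exists z0; rewrite //= scale1r add0r].
have Kz : K (z n.+1) by rewrite (z_succE psum_c); exact: (farP Kc (gap_gt0 n)).1.
split=> //; have [w Kw psum_w] := convex_nat_barycenter n.+1 cvK Kz Kc.
by exists w; rewrite // psumS psum_c addrC.
Qed.

Let z_far_mean n : n.+1%:R * d - d / n.+2%:R < `|psum n.+1 - n.+1%:R *: z n.+1|.
Proof.
have [_ [c Kc psum_c]] := z_mean n; have := (farP Kc (gap_gt0 n)).2.
rewrite -(z_succE psum_c) psum_c -scalerBr normrZ ger0_norm ?ler0n //.
have n1_gt0 : (0 : R) < n.+1%:R by rewrite ltr0n.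
rewrite -(ltr_pM2l n1_gt0) mulrBr; congr (_ - _ < _).
by rewrite invfM mulrCA mulVKf ?pnatr_eq0.
Qed.

Let psum_split n i : (i <= n)%N -> exists2 w, K w & psum n.+1 = z i + n%:R *: w.
Proof.
elim: n i => [|n IH] i.
  by rewrite leqn0 => /eqP ->; exists z0; rewrite // scale0r addr0 /= add0r.
rewrite leq_eqVlt ltnS => /orP [/eqP ->|/IH [w Kw psum_w]].
  by have [_ [c Kc psum_c]] := z_mean n; exists c; rewrite // psumS psum_c addrC.
have [w' Kw' w'E] := convex_nat_barycenter n cvK (z_mean n.+1).1 Kw.
by exists w'; rewrite // psumS psum_w -addrA [_ + z _]addrC w'E.
Qed.

Hypothesis K_diam_le : forall a b, K a -> K b -> `|a - b| <= d.

Lemma diametral_sequence : exists z : nat -> X, (forall n, K (z n)) /\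
  forall n y, convex_hull [set z i | i in `I_n.+1] y ->
    d - d / n.+2%:R < `|y - z n.+1|.
Proof.
exists z; split=> [n|n y]; first exact: (z_mean n).1.
pose E := [set y | exists2 w, K w & psum n.+1 = y + n%:R *: w].
have convex_E : convex_set_of E.
  move=> y1 y2 t [w1 Kw1 e1] [w2 Kw2 e2] t0 t1.
  exists (t *: w1 + (1 - t) *: w2); first exact: cvK.
  rewrite !scalerDr !scalerA [n%:R * t]mulrC [n%:R * (1 - t)]mulrC addrACA.
  by rewrite -!scalerA -!scalerDr -e1 -e2 -scalerDl subrKC scale1r.
move=> /(convex_hull_min convex_E) [|w Kw psum_w].
  by move=> _ [i /= i_le_n <-]; apply: psum_split.
(* [psum n.+1 - n.+1 z] is far from [0], but it is [(y - z) + n (w - z)]. *)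
have := z_far_mean n.
have -> : psum n.+1 - n.+1%:R *: z n.+1 = (y - z n.+1) + n%:R *: (w - z n.+1).
  by rewrite psum_w -natr1 scalerDl scale1r scalerBr opprD [- _ - z n.+1]addrC addrACA.
have : `|n%:R *: (w - z n.+1)| <= n%:R * d.
  rewrite normrZ ger0_norm ?ler0n // ler_wpM2l ?ler0n //.
  by apply: K_diam_le => //; exact: (z_mean n.+1).1.
have := ler_normD (y - z n.+1) (n%:R *: (w - z n.+1)).
rewrite -natr1 mulrDl mul1r; move: (n%:R * d) (d / n.+2%:R) => nd e; lra.
Qed.

End DiametralSequence.

Section ShiftMap.
Context {R : realType} {X : normedModType R}.
Variables (K : set X) (d : R) (z : nat -> X).
Hypotheses (cK : closed K) (cvK : convex_set_of K)
  (K_diam_le : forall a b, K a -> K b -> `|a - b| <= d) (K_z : forall n, K (z n))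
  (z_far : forall n y, convex_hull [set z i | i in `I_n.+1] y ->
     d - d / n.+2%:R < `|y - z n.+1|).

Let hull_init m := convex_hull [set z i | i in `I_m].

Let hull_init_mono m m' : (m <= m')%N -> hull_init m `<=` hull_init m'.
Proof.
move=> mm'; apply: convex_hull_subset => _ [i im <-]; exists i => //=.
exact: leq_trans im mm'.
Qed.

Let hull_init_far m n y : (m <= n.+1)%N -> hull_init m y ->
  d - d / n.+2%:R < `|y - z n.+1|.
Proof. by move=> mn /(hull_init_mono mn); apply: z_far. Qed.

Let z_hull_init k : hull_init k.+1 (z k).
Proof. by apply: subset_convex_hull; exists k => /=. Qed.

Let z_inj : injective z.
Proof.
suff z_neq k n : (k < n)%N -> z k <> z n.
  move=> a b zab; case: (ltngtP a b) => // ab; exfalso.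
    exact: z_neq ab zab.
  exact: z_neq ab (esym zab).
case: n => [//|n] kn zkn; have := hull_init_far kn (@z_hull_init k).
have d_ge0 : 0 <= d by have := K_diam_le (K_z 0) (K_z 0); rewrite subrr normr0.
have : d / n.+2%:R <= d by rewrite ler_pdivrMr ?ltr0n // ler_peMr // ler1n.
by rewrite zkn subrr normr0; move: (d / _) => e; lra.
Qed.

Let U := \bigcup_m hull_init m.

Let convex_U : convex_set_of U.
Proof.
move=> a b t [m1 _ h1] [m2 _ h2] t0 t1; exists (maxn m1 m2) => //.
apply: convex_convex_hull => //.
  by apply: (hull_init_mono (leq_maxl m1 m2)).
by apply: (hull_init_mono (leq_maxr m1 m2)).
Qed.

Let D := closure U.

Let D_sub_K : D `<=` K.
Proof.
have UK : U `<=` K by move=> y [m _]; apply: convex_hull_min => // _ [i _ <-].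
by move=> x /(closureS UK) /cK.
Qed.

Let z_D k : D (z k).
Proof. by apply: subset_closure; exists k.+1. Qed.

Definition shift x := if pselect (exists k, x = z k) is left h
  then z (sval (cid h)).+1 else z 0.

Let shift_z k : shift (z k) = z k.+1.
Proof.
rewrite /shift; case: pselect => [h|]; last by case; exists k.
by case: (cid h) => k' /= /z_inj ->.
Qed.

Let shift_notz x : ~ (exists k, x = z k) -> shift x = z 0.
Proof. by rewrite /shift; case: pselect. Qed.

Let iter_shift_z j k : iter j shift (z k) = z (k + j).
Proof. by elim: j k => [|j IH] k /=; rewrite ?addn0 // IH shift_z addnS. Qed.

Let iter_shift_notz x j : ~ (exists k, x = z k) -> iter j.+1 shift x = z j.
Proof.
move=> x_notz; elim: j => [|j IH] /=; first exact: shift_notz.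
by move: IH => /= ->; rewrite shift_z.
Qed.

Let shift_D x : D (shift x).
Proof. by rewrite /shift; case: pselect => [h|_]; apply: z_D. Qed.

Let eventually_small g : 0 < g -> exists N, forall n, (N <= n)%N -> d / n.+2%:R < g.
Proof.
move=> g_gt0; case: (lerP d 0) => d_gt0.
  by exists 0%N => n _; apply: le_lt_trans g_gt0; apply: mulr_le0_ge0.
have [N hN] := ltr_add_invr (divr_gt0 g_gt0 d_gt0); rewrite add0r in hN.
exists N => n Nn; rewrite -ltr_pdivlMl // mulrC; apply: le_lt_trans hN.
by rewrite lef_pV2 ?posrE // ler_nat ltnS leqW.
Qed.

Let orbit_radius_shift x : D x -> orbit_radius shift x = d.
Proof.
move=> Dx; have orbit_le n : `|x - iter n shift x| <= d.
  by apply: K_diam_le; apply: D_sub_K => //; case: n => [|n] //=; apply: shift_D.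
apply/le_anti; rewrite orbit_radius_le //=; apply/ler_addgt0Pr => g g_gt0.
suff [n hn] : exists n, d - g < `|x - iter n shift x|.
  by have := le_orbit_radius n orbit_le; lra.
have g2_gt0 : 0 < g / 2 by rewrite divr_gt0.
have [N hN] := eventually_small g2_gt0.
case: (pselect (exists k, x = z k)) => [[k ->]|x_notz].
  have k_le : (k <= (maxn k N).+1)%N by rewrite leqW ?leq_maxl.
  exists ((maxn k N).+1 - k)%N; rewrite iter_shift_z subnKC //.
  have := hull_init_far (n := maxn k N) _ (@z_hull_init k).
  rewrite ltnS leq_maxl => /(_ isT).
  by have := hN _ (leq_maxr k N); move: (d / _) => e; lra.
have [y [m _ Uy] xy] := (closure_normP _ _).1 Dx _ g2_gt0.
exists (maxn m N).+2; rewrite iter_shift_notz //.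
have := hull_init_far (leqW (leq_maxl m N)) Uy; have := hN _ (leq_maxr m N).
have : `|y - z (maxn m N).+1| <= `|y - x| + `|x - z (maxn m N).+1|.
  by rewrite (le_trans _ (ler_normD _ _)) // addrA subrK.
by rewrite distrC in xy; move: (d / _) => e; lra.
Qed.

Lemma fixed_point_free_Kannan_map : exists (C : set X) (T : X -> X),
  [/\ C `<=` K, closed C, convex_set_of C & C !=set0] /\
  [/\ T @` C `<=` C, orbitally_Kannan C T, diminishes_radius_of_orbits C T &
      forall x, C x -> T x <> x].
Proof.
exists D, shift; split; split => //.
- exact: closed_closure.
- exact: convex_closure convex_U.
- by exists (z 0).
- by move=> _ [x _ <-].
- move=> x y Dx Dy; rewrite -[rad x _]/(orbit_radius shift x).
  rewrite -[rad y _]/(orbit_radius shift y) !orbit_radius_shift //.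
  by have := K_diam_le (D_sub_K (@shift_D x)) (D_sub_K (@shift_D y)); lra.
- move=> x Dx; rewrite -[rad x _]/(orbit_radius shift x).
  by rewrite -[rad (shift x) _]/(orbit_radius shift (shift x)) !orbit_radius_shift.
- move=> x Dx; case: (pselect (exists k, x = z k)) => [[k ->]|x_notz].
    by rewrite shift_z => /z_inj /eqP; rewrite (gtn_eqF (ltnSn k)).
  by rewrite shift_notz // => z0x; apply: x_notz; exists 0%N.
Qed.

End ShiftMap.

Section Equivalence.
Context {R : realType} {X : normedModType R}.

Definition Kannan_fixed_point_property : Prop :=
  forall (C : set X) (T : X -> X), weakly_compact C -> convex_set_of C ->
    C !=set0 -> T @` C `<=` C -> orbitally_Kannan C T ->
    diminishes_radius_of_orbits C T -> exists2 x, C x & T x = x.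

Lemma weak_normal_structure_Kannan_fpp :
  @weak_normal_structure R X -> Kannan_fixed_point_property.
Proof.
move=> wns C T wC cvC C0 TC kan dim.
by apply: orbitally_Kannan_fixed_point => // x Cx; apply: TC; exists x.
Qed.

Lemma Kannan_fpp_weak_normal_structure :
  Kannan_fixed_point_property -> @weak_normal_structure R X.
Proof.
move=> fpp K wK _ _ K0 K0K cK0 cvK0 d_gt0; apply: contrapT => nns.
set d := diam K0 in d_gt0.
have diametral x : K0 x -> d <= rad x K0.
  by move=> K0x; rewrite leNgt; apply/negP => lt; apply: nns; exists x.
have bounded : has_sup [set `|x - y| | x in K0 & y in K0].
  by apply: contrapT => hs; move: d_gt0; rewrite /d /diam sup_out // ltxx.
have K0_le a b : K0 a -> K0 b -> `|a - b| <= d.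
  by move=> Ka Kb; apply: (ub_le_sup bounded.2); exists a => //; exists b.
have [z0 K0z0] : K0 !=set0 by case: bounded => [[_ [a Ka _]]] _; exists a.
have far x g : exists z, K0 x -> 0 < g -> K0 z /\ d - g < `|x - z|.
  case: (pselect (K0 x /\ 0 < g)) => [[K0x g_gt0]|nh]; last first.
    by exists z0 => K0x g_gt0; exfalso; apply: nh.
  have ne : [set `|x - y| | y in K0] !=set0 by exists `|x - x|, x.
  have : d - g < rad x K0.
    by apply: lt_le_trans (diametral x K0x); rewrite ltrBlDr ltrDl.
  by move=> /(sup_gt ne) [_ [z K0z <-] dz]; exists z.
have [F FP] : exists F : X -> R -> X,
    forall x g, K0 x -> 0 < g -> K0 (F x g) /\ d - g < `|x - F x g|.
  by exists (fun x => projT1 (choice (far x))) => x; exact: projT2 (choice (far x)).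
have [z [K0z z_far]] := diametral_sequence d_gt0 cvK0 K0z0 FP K0_le.
have [C [T [[CK0 cC cvC C0] [TC kan dim fixfree]]]] :=
  fixed_point_free_Kannan_map cK0 cvK0 K0_le K0z z_far.
have wC := weakly_compact_closed_convex_sub wK (fun x Cx => K0K x (CK0 x Cx)) cC cvC.
by have [x Cx] := fpp C T wC cvC C0 TC kan dim; apply: fixfree.
Qed.

End Equivalence.

Theorem theorem4p6 (R : realType) (X : completeNormedModType R) :
  @weak_normal_structure R X <->
  (forall (C : set X) (T : X -> X),
      weakly_compact C -> convex_set_of C -> C !=set0 ->
      T @` C `<=` C ->
      orbitally_Kannan C T -> diminishes_radius_of_orbits C T ->
      exists x, [/\ C x, T x = x & forall y, C y -> T y = y -> y = x]).
Proof.
split=> [wns C T wC cvC C0 TC kan dim | fpp].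
  have [x Cx Tx] := weak_normal_structure_Kannan_fpp wns wC cvC C0 TC kan dim.
  by exists x; split=> // y Cy Ty; apply: orbitally_Kannan_fixed_unique kan Cy Cx Ty Tx.
apply: Kannan_fpp_weak_normal_structure => C T wC cvC C0 TC kan dim.
by have [x [Cx Tx _]] := fpp C T wC cvC C0 TC kan dim; exists x.
Qed.
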